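(* For all $\Sigma\in\mathcal{P}(\mathit{State})$, $$\alpha^{\mathsf{v}}(\Sigma)=\bigsqcup\big\{\langle\{\langle\ell,\langle s,h|_{\mathrm{rng}(s)}\rangle\rangle\},\; h|_{\mathit{Addr}\setminus\mathrm{rng}(s)}\rangle \;\big|\; \langle\ell,\langle s,h\rangle\rangle\in\Sigma\big\},$$ where $h|_X$ denotes the restriction of $h$ to $X$ (the second component viewed as a set of pairs $\langle a,h(a)\rangle$) and $\bigsqcup$ is the join in $\mathcal{A}^{\mathsf{v}}$. Moreover, $\alpha^{\mathsf{v}}(\top)=\top$.
   Context: Setting (heap programs): $\mathit{Var}=\mathit{Var}_p\uplus\mathit{Var}_d$ are pointer/data program variables, $\mathit{Fld}=\mathit{Fld}_p\uplus\mathit{Fld}_d$ pointer/data fields, $\mathit{Addr}$ a set of addresses containing $\mathsf{null}$, $\mathit{Val}=\mathit{Addr}\uplus\mathbb{Z}$, $\mathit{Loc}$ a finite set of control locations. A stack $s:\mathit{Var}\to\mathit{Val}$ is safe if $s(\mathit{Var}_p)\subseteq\mathit{Addr}$ and $s(\mathit{Var}_d)\subseteq\mathbb{Z}$. A heap is a partial map $h:\mathit{Addr}\rightharpoonup\mathit{FldVal}$ with $\mathit{FldVal}=(\mathit{Fld}\uplus\{\mathsf{free}\})\to\mathit{Val}$; it is safe if for all $a\in\mathrm{dom}(h)$, $h(a)(\mathit{Fld}_p)\subseteq\mathit{Addr}\cap\mathrm{dom}(h)$ and $h(a)(\mathit{Fld}_d\uplus\{\mathsf{free}\})\subseteq\mathbb{Z}$;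 $\mathit{Heap}$ is the set of safe heaps. A state is $\langle\ell,\langle s,h\rangle\rangle$ with $\ell\in\mathit{Loc}$, $s$ a safe stack, $h$ a safe heap and $\mathrm{rng}(s)\cap\mathit{Addr}\subseteq\mathrm{dom}(h)$; $\mathit{State}$ is the set of states. The concrete domain is $\mathcal{C}=\mathcal{P}(\mathit{State})\cup\{\top\}$ ordered by $X\sqsubseteq Y$ iff ($X,Y$ are sets and $X\subseteq Y$) or $Y=\top$. View abstraction: the view states are $\mathit{State}^{\mathsf{v}}=\mathit{Loc}\times\{\top\}\cup\{\langle\ell,\langle s,h\rangle\rangle \mid \mathrm{dom}(h)=s(\mathit{Var}_p)\}$ (the view heap $h$ may point outside its domain, so need not be safe). The abstract domain is $\mathcal{A}^{\mathsf{v}}=(\mathcal{P}(\mathit{State}^{\mathsf{v}})\times\mathcal{P}(\mathit{Addr}\times\mathit{FldVal}))\cup\{\top\}$, ordered by componentwise subset inclusion with $\top$ as top element; it is a complete lattice. For a view heap $h$ and $H\subseteq\mathit{Addr}\times\mathit{FldVal}$ (the space invariant), the completion $H\triangleright h$ is the set of safe heaps $h'$ with $h'=h\uplus h''$ for some $h''\in\mathit{Heap}$ whose graph is contained in $H$. The concretization is $\gamma^{\mathsf{v}}(\Sigma,H)=\{\langle\ell,\langle s,h'\rangle\rangle \mid \langle\ell,\langle s,h\rangle\rangle\in\Sigma \wedge h'\in H\triangleright h\}$ and $\gamma^{\mathsf{v}}(\top)=\top$. The abstraction $\alpha^{\mathsf{v}}:\mathcal{C}\to\mathcal{A}^{\mathsf{v}}$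 is defined as $\alpha^{\mathsf{v}}(\Sigma)=$ the greatest lower bound (meet) in $\mathcal{A}^{\mathsf{v}}$ of the set $\{V\in\mathcal{A}^{\mathsf{v}} \mid \Sigma\sqsubseteq\gamma^{\mathsf{v}}(V)\}$. *)

From Stdlib Require Import ZArith ClassicalDescription.

Section ViewAbstraction.
Context {VarP VarD FldP FldD Addr Loc : Type}.

Definition Var : Type := (VarP + VarD)%type.
Definition Fld : Type := (FldP + FldD)%type.
Definition Val : Type := (Addr + Z)%type.
(* FldVal = (Fld ⊎ {free}) -> Val ; the extra point [inr tt] is "free" *)
Definition FldVal : Type := (Fld + unit)%type -> Val.
Definition Stack : Type := Var -> Val.
Definition Heap : Type := Addr -> option FldVal.

Definition dom (h : Heap) (a : Addr) : Prop := exists v, h a = Some v.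
Definition rng (s : Stack) (a : Addr) : Prop := exists x, s x = inl a.

Definition safe_stack (s : Stack) : Prop :=
  (forall x : VarP, exists a, s (inl x) = inl a) /\
  (forall x : VarD, exists z, s (inr x) = inr z).

Definition safe_heap (h : Heap) : Prop :=
  forall a v, h a = Some v ->
    (forall f : FldP, exists b, v (inl (inl f)) = inl b /\ dom h b) /\
    (forall f : FldD, exists z, v (inl (inr f)) = inr z) /\
    (exists z, v (inr tt) = inr z).

Definition RState : Type := (Loc * (Stack * Heap))%type.
Definition is_state (st : RState) : Prop :=
  match st with
  | (l, (s, h)) => safe_stack s /\ safe_heap h /\ (forall a, rng s a -> dom h a)
  end.

(* raw view states: [None] is ⊤ in Loc × {⊤} *)
Definition RVState : Type := (Loc * option (Stack * Heap))%type.
Definition is_vstate (v : RVState) : Prop :=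
  match v with
  | (_, None) => True
  | (_, Some (s, h)) => forall a, dom h a <-> exists x : VarP, s (inl x) = inl a
  end.

(* concrete domain C = P(State) ∪ {⊤}; [None] is ⊤ *)
Definition CDom : Type := option (RState -> Prop).
Definition wfC (X : CDom) : Prop :=
  match X with None => True | Some Sv => forall st, Sv st -> is_state st end.
Definition leC (X Y : CDom) : Prop :=
  match Y with
  | None => True
  | Some y => match X with None => False | Some x => forall st, x st -> y st end
  end.

(* abstract domain A^v = (P(State^v) × P(Addr × FldVal)) ∪ {⊤}; [None] is ⊤ *)
Definition AV : Type := option ((RVState -> Prop) * (Addr * FldVal -> Prop)).
Definition wfAV (V : AV) : Prop :=
  match V with None => True | Some (Sv, _) => forall v, Sv v -> is_vstate v end.

Definition meetA (F : AV -> Prop) : AV :=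
  if excluded_middle_informative (exists Sv H, F (Some (Sv, H))) then
    Some (fun v => forall Sv H, F (Some (Sv, H)) -> Sv v,
          fun p => forall Sv H, F (Some (Sv, H)) -> H p)
  else None.

Definition joinA (F : AV -> Prop) : AV :=
  if excluded_middle_informative (F None) then None
  else Some (fun v => exists Sv H, F (Some (Sv, H)) /\ Sv v,
             fun p => exists Sv H, F (Some (Sv, H)) /\ H p).

Definition heap_union (h1 h2 h : Heap) : Prop :=
  (forall a, dom h1 a -> ~ dom h2 a) /\
  (forall a, h a = match h1 a with Some v => Some v | None => h2 a end).

Definition graph (h : Heap) (p : Addr * FldVal) : Prop := h (fst p) = Some (snd p).

Definition completion (H : Addr * FldVal -> Prop) (h h' : Heap) : Prop :=
  safe_heap h' /\
  exists h'' : Heap, (forall p, graph h'' p -> H p) /\ heap_union h h'' h'.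

Definition gammaV (V : AV) : CDom :=
  match V with
  | None => None
  | Some (Sv, H) =>
      Some (fun st => match st with
                      | (l, (s, h')) => is_state (l, (s, h')) /\
                          exists h, Sv (l, Some (s, h)) /\ completion H h h'
                      end)
  end.

Definition alphaV (X : CDom) : AV :=
  meetA (fun V => wfAV V /\ leC X (gammaV V)).

Definition restr (h : Heap) (X : Addr -> Prop) : Heap :=
  fun a => if excluded_middle_informative (X a) then h a else None.

End ViewAbstraction.

(* In the abstract lattice the meet of all sound abstractions is attained as soon as some
   sound abstraction lies below every other one.  The join of the per-state views is such an
   element: each state splits as the view of its stack plus the rest of its heap, so the join
   is sound; conversely, any sound abstraction must contain, for each state, a view whose
   domain is the stack range, and that view is forced to be [h|rng s], with the remaining
   heap cells landing in the space invariant. *)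
From Stdlib Require Import ClassicalDescription.
From Stdlib Require Import FunctionalExtensionality PropExtensionality.

Lemma pred_ext {T : Type} (P Q : T -> Prop) : (forall x, P x <-> Q x) -> P = Q.
Proof.
  intro PQ. apply functional_extensionality; intro x.
  apply propositional_extensionality, PQ.
Qed.

Section ViewAbstractionProofs.
Context {VarP VarD FldP FldD Addr Loc : Type}.

Notation Stack := (@Stack VarP VarD Addr).
Notation Heap := (@Heap FldP FldD Addr).
Notation RState := (@RState VarP VarD FldP FldD Addr Loc).
Notation RVState := (@RVState VarP VarD FldP FldD Addr Loc).
Notation AV := (@AV VarP VarD FldP FldD Addr Loc).

Lemma meetA_least (F : AV -> Prop) Sv0 H0 :
  F (Some (Sv0, H0)) ->
  (forall Sv H, F (Some (Sv, H)) ->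
     (forall v, Sv0 v -> Sv v) /\ (forall p, H0 p -> H p)) ->
  meetA F = Some (Sv0, H0).
Proof.
  intros F0 least. unfold meetA.
  destruct excluded_middle_informative as [_ | none].
  2: { exfalso; apply none; exists Sv0, H0; exact F0. }
  f_equal; f_equal; apply pred_ext; intro x; split.
  - intro all; exact (all _ _ F0).
  - intros x0 Sv H FSH; exact (proj1 (least _ _ FSH) x x0).
  - intro all; exact (all _ _ F0).
  - intros x0 Sv H FSH; exact (proj2 (least _ _ FSH) x x0).
Qed.

Lemma rng_safe_iff (s : Stack) (a : Addr) :
  safe_stack s -> (rng s a <-> exists x : VarP, s (inl x) = inl a).
Proof.
  intros [_ data]; split.
  - intros [[x | x] sx]; [eauto |].
    destruct (data x) as [z sz]; congruence.
  - intros [x sx]; exists (inl x); exact sx.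
Qed.

Lemma restr_heap_union (h : Heap) (X : Addr -> Prop) :
  heap_union (restr h X) (restr h (fun a => ~ X a)) h.
Proof.
  unfold restr; split.
  - intros a [v hv] [w hw].
    destruct (excluded_middle_informative (X a));
      destruct (excluded_middle_informative (~ X a)); congruence.
  - intro a. destruct (excluded_middle_informative (X a)) as [xa | nxa].
    + destruct (h a); [reflexivity |].
      destruct (excluded_middle_informative (~ X a)); [contradiction | reflexivity].
    + destruct (excluded_middle_informative (~ X a)); [reflexivity | contradiction].
Qed.

Lemma completion_restr (h : Heap) (X : Addr -> Prop) :
  safe_heap h -> completion (graph (restr h (fun a => ~ X a))) (restr h X) h.
Proof.
  intro safe_h; split; [exact safe_h |].
  exists (restr h (fun a => ~ X a)); split; [tauto | apply restr_heap_union].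
Qed.

Lemma heap_union_restr_dom (h h1 h2 : Heap) (X : Addr -> Prop) :
  (forall a, dom h1 a <-> X a) -> heap_union h1 h2 h -> h1 = restr h X.
Proof.
  intros dom_h1 [_ union]. apply functional_extensionality; intro a.
  unfold restr. destruct (excluded_middle_informative (X a)) as [xa | nxa].
  - rewrite union. destruct (h1 a) eqn:E; [reflexivity |].
    destruct (proj2 (dom_h1 a) xa) as [v hv]; congruence.
  - destruct (h1 a) eqn:E; [| reflexivity].
    exfalso; apply nxa, dom_h1; eexists; eauto.
Qed.

Lemma graph_restr_compl (h h2 : Heap) (X : Addr -> Prop) p :
  heap_union (restr h X) h2 h -> graph (restr h (fun a => ~ X a)) p -> graph h2 p.
Proof.
  unfold graph, restr; intros [_ union] hp.
  destruct (excluded_middle_informative (~ X (fst p))) as [nx |]; [| discriminate].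
  rewrite union in hp.
  destruct (excluded_middle_informative (X (fst p))); [contradiction | exact hp].
Qed.

Lemma is_vstate_view (l : Loc) (s : Stack) (h : Heap) :
  is_state (l, (s, h)) -> is_vstate (l, Some (s, restr h (rng s))).
Proof.
  intros [safe_s [_ rng_dom]] a. rewrite <- (rng_safe_iff s a safe_s).
  unfold dom, restr. destruct (excluded_middle_informative (rng s a)) as [r | r].
  - split; [intros _; exact r | intros _; exact (rng_dom a r)].
  - split; [intros [v hv]; discriminate | contradiction].
Qed.

Variable Sigma : RState -> Prop.
Hypothesis Sigma_states : wfC (Some Sigma).

Definition views : RVState -> Prop :=
  fun v => exists l s h, Sigma (l, (s, h)) /\ (l, Some (s, restr h (rng s))) = v.

Definition off_view_cells : Addr * FldVal -> Prop :=
  fun p => exists l s h, Sigma (l, (s, h)) /\ graph (restr h (fun a => ~ rng s a)) p.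

Lemma joinA_views :
  joinA (fun V => exists l s h, Sigma (l, (s, h)) /\
           V = Some (eq (l, Some (s, restr h (rng s))),
                     graph (restr h (fun a => ~ rng s a)))) =
  Some (views, off_view_cells).
Proof.
  unfold joinA. destruct excluded_middle_informative as [[l [s [h [_ E]]]] | _].
  { discriminate. }
  f_equal; f_equal; apply pred_ext; intro x; split.
  - intros [Sv [H [[l [s [h [Sh E]]]] Svx]]]. injection E; intros; subst.
    exists l, s, h; auto.
  - intros [l [s [h [Sh E]]]]. do 2 eexists; split; [exists l, s, h; eauto | exact E].
  - intros [Sv [H [[l [s [h [Sh E]]]] Hx]]]. injection E; intros; subst.
    exists l, s, h; auto.
  - intros [l [s [h [Sh E]]]]. do 2 eexists; split; [exists l, s, h; eauto | exact E].
Qed.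

Lemma views_sound :
  wfAV (Some (views, off_view_cells)) /\
  leC (Some Sigma) (gammaV (Some (views, off_view_cells))).
Proof.
  split.
  - intros v [l [s [h [Sh <-]]]]. exact (is_vstate_view l s h (Sigma_states _ Sh)).
  - intros [l [s h]] Sh. pose proof (Sigma_states _ Sh) as st.
    split; [exact st |].
    exists (restr h (rng s)); split; [exists l, s, h; auto |].
    destruct (completion_restr h (rng s) (proj1 (proj2 st))) as [safe_h [h2 [h2_in union]]].
    split; [exact safe_h |].
    exists h2; split; [intros p hp; exists l, s, h; auto | exact union].
Qed.

Lemma views_least Sv H :
  wfAV (Some (Sv, H)) -> leC (Some Sigma) (gammaV (Some (Sv, H))) ->
  (forall v, views v -> Sv v) /\ (forall p, off_view_cells p -> H p).
Proof.
  intros vstates covers.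
  assert (split_state : forall l s h, Sigma (l, (s, h)) ->
            Sv (l, Some (s, restr h (rng s))) /\
            exists h2, (forall p, graph h2 p -> H p) /\
                       heap_union (restr h (rng s)) h2 h).
  { intros l s h Sh.
    destruct (covers _ Sh) as [[safe_s _] [h1 [Sv_h1 [_ [h2 [h2_in union]]]]]].
    assert (h1 = restr h (rng s)) as ->.
    { apply (heap_union_restr_dom h h1 h2); [| exact union].
      intro a. rewrite (rng_safe_iff s a safe_s). exact (vstates _ Sv_h1 a). }
    split; [exact Sv_h1 | exists h2; auto]. }
  split.
  - intros v [l [s [h [Sh <-]]]]. exact (proj1 (split_state l s h Sh)).
  - intros p [l [s [h [Sh hp]]]].
    destruct (split_state l s h Sh) as [_ [h2 [h2_in union]]].
    exact (h2_in p (graph_restr_compl h h2 (rng s) p union hp)).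
Qed.

End ViewAbstractionProofs.

Theorem lemma4p2 (VarP VarD FldP FldD Addr Loc : Type) (null : Addr) :
  (forall Sigma : @RState VarP VarD FldP FldD Addr Loc -> Prop,
     wfC (Some Sigma) ->
     alphaV (Some Sigma) =
     joinA (fun V => exists l s h, Sigma (l, (s, h)) /\
              V = Some (eq (l, Some (s, restr h (rng s))),
                        graph (restr h (fun a => ~ rng s a))))) /\
  @alphaV VarP VarD FldP FldD Addr Loc None = None.
Proof.
  split.
  - intros Sigma Sigma_states.
    rewrite joinA_views. apply meetA_least.
    + exact (views_sound Sigma Sigma_states).
    + intros Sv H [vstates covers]. exact (views_least Sigma Sv H vstates covers).
  - unfold alphaV, meetA.
    destruct excluded_middle_informative as [[Sv [H [_ top_below]]] |]; [contradiction | reflexivity].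
Qed.
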